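(* Let $d$ be odd and $n\ge d+1$. Then: (i) if $n=d+1$, $C^d_n=A_n$; (ii) if $n=d+2$, $C^d_n=A_n\cap(S_{\frac{n-1}{2}}\times S_{\frac{n+1}{2}})$, where $S_{\frac{n-1}{2}}$ permutes the even indices and $S_{\frac{n+1}{2}}$ permutes the odd indices in $\{1,\dots,n\}$; (iii) if $n\ge d+3$ and $\frac{d+1}{2}$ is even, $C^d_n\cong\mathbb Z/2$; (iv) if $n\ge d+3$ and $\frac{d+1}{2}$ is odd, $C^d_n$ is trivial.
   Context: For $n\ge d+1$, let $C^d_n\subseteq S_n$ be the subgroup of permutations $\sigma$ with the following property: for all $x_1,\dots,x_n\in\mathbb R^d$ such that the $(d+1)\times n$ matrix with columns $\binom{1}{x_1},\dots,\binom{1}{x_n}$ has all maximal minors positive, the matrix with columns $\binom{1}{x_{\sigma(1)}},\dots,\binom{1}{x_{\sigma(n)}}$ also has all maximal minors positive. Equivalently, $C^d_n$ is the stabiliser, under column permutation, of the set of such positive matrices. $A_n$ is the alternating group. *)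

From HB Require Import structures.
From mathcomp Require Import all_boot all_order all_algebra all_fingroup all_solvable.
From mathcomp Require Import boolp reals.
Set Implicit Arguments. Unset Strict Implicit. Unset Printing Implicit Defensive.
Import Order.TTheory GRing.Theory Num.Theory.
Local Open Scope ring_scope.

(* The (d+1) x n matrix whose j-th column is (1, x_j). Points are indexed 0..n-1. *)
Definition lift_mx (R : realType) (d n : nat) (x : 'I_n -> 'cV[R]_d) : 'M[R]_(1 + d, n) :=
  col_mx (const_mx 1) (\matrix_(i < d, j < n) x j i ord0).

Definition positive_config (R : realType) (d n : nat) (x : 'I_n -> 'cV[R]_d) : Prop :=
  forall f : 'I_(1 + d) -> 'I_n,
    (forall i j : 'I_(1 + d), (i < j)%N -> (f i < f j)%N) ->
    0 < \det (colsub f (lift_mx x)).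

Definition Cdn (R : realType) (d n : nat) : {set 'S_n} :=
  [set s : 'S_n | `[< forall x : 'I_n -> 'cV[R]_d,
        positive_config x -> positive_config (fun j => x (s j)) >] ].

From HB Require Import structures.
From mathcomp Require Import all_boot all_order all_algebra all_fingroup all_solvable.
From mathcomp Require Import boolp reals.
From mathcomp Require Import zify.
Import Order.TTheory GRing.Theory Num.Theory.

Set Implicit Arguments. Unset Strict Implicit. Unset Printing Implicit Defensive.

(* A column permutation s preserves positivity iff every (d+1)-set of
   columns carries an even number of s-inversions.  On the moment curve every
   maximal minor is a Vandermonde determinant, whose sign is (-1)^(number of
   inversions); conversely the minor on the columns s o f is, up to the sign of
   the permutation sorting s o f, a minor of the original positive matrix, and
   that sign is again the inversion parity.  With k = d+1 even, the parity
   condition says that s is even when n = k; when n = k+1 it further forces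
   s to preserve the parity of every index (an odd permutation would flip all
   parities, impossible on an odd number of points); and when n >= k+2 it
   forces all pairs to be inverted or none, so s is the identity or the
   reversal, which has C(k,2) = k/2 (mod 2) inversions on every k-set. *)

Lemma big_addb_const (I : finType) (A : {pred I}) (c : bool) :
  \big[addb/false]_(i in A) c = c && odd #|A|.
Proof. by rewrite big_const; elim: #|A| => [|j /= ->]; case: c. Qed.

Lemma exists_card_avoiding (T : finType) (s : seq T) j : j + size s <= #|T| ->
  exists2 V : {set T}, #|V| = j & {in V, forall v, v \notin s}.
Proof.
move=> j_le; have jA : j <= #|~: [set v in s]|.
  have : #|[set v in s]| <= size s by rewrite cardsE card_size.
  have := cardsC [set v in s]; lia.
exists [set v in take j (enum (~: [set v in s]))]; last first.
  by move=> v; rewrite inE => /mem_take; rewrite mem_enum !inE.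
by rewrite cardsE (card_uniqP _) ?take_uniq ?enum_uniq // size_takel // -cardE.
Qed.

Lemma odd_bin2 k : odd 'C(k, 2) = odd k./2.
Proof.
rewrite bin2 -{1 2}(odd_double_half k); case: (odd k); rewrite ?add1n ?add0n.
  by rewrite succnK -doubleMr doubleK oddM oddS odd_double.
rewrite -doubleMl doubleK oddM; case: k./2 => [//|m].
by rewrite doubleS /= odd_double andbT.
Qed.

Lemma big_addb_ltn n m : \big[addb/false]_(u < n) (m < u) = odd (n - m.+1).
Proof.
elim: n => [|n IH]; first by rewrite big_ord0.
rewrite big_ord_recr /= IH; case: (ltnP m n) => mn.
  have -> : n.+1 - m.+1 = (n - m.+1).+1 by lia.
  by rewrite /= addbT.
by have [-> ->] : n.+1 - m.+1 = 0 /\ n - m.+1 = 0 by split; lia.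
Qed.

Lemma perm_parity_fixed n (s : 'S_n) : odd n -> exists i, odd (s i) = odd i.
Proof.
move=> n_odd; have : ~~ [forall i, odd (s i) != odd i].
  apply/forallP => flip.
  have sum_flip : \sum_(i < n) (odd (s i) + odd i) = n.
    rewrite -[RHS]card_ord -sum1_card; apply: eq_bigr => i _.
    by move/negbTE: (flip i); case: odd; case: odd.
  have sum_s : \sum_(i < n) odd (s i) = \sum_(i < n) odd i.
    by rewrite (reindex_inj (@perm_inj _ s^-1)) /=; apply: eq_bigr => i _; rewrite permKV.
  by move: n_odd; rewrite -sum_flip big_split /= sum_s addnn odd_double.
by rewrite negb_forall => /existsP[i /negPn/eqP]; exists i.
Qed.

Section IncreasingMaps.
Variables (m n : nat) (f : 'I_m -> 'I_n).
Hypothesis f_incr : {homo f : i j / i < j}.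

Lemma homo_ltn_ord_leq (i : 'I_m) : i <= f i.
Proof.
case: i => i; elim: i => [//|i IH] lt_i_m.
have := @f_incr (Ordinal (ltnW lt_i_m)) (Ordinal lt_i_m) (ltnSn i).
by have := IH (ltnW lt_i_m); rewrite /=; lia.
Qed.

Lemma homo_ltn_ord_inj : injective f.
Proof. exact: inc_inj (le_mono f_incr). Qed.

Lemma homo_ltn_ord_mono : {mono f : i j / i < j}.
Proof. exact: leW_mono (le_mono f_incr). Qed.

End IncreasingMaps.

Lemma homo_ltn_ord_id n (f : 'I_n -> 'I_n) : {homo f : i j / i < j} -> f =1 id.
Proof.
move=> f_incr i; apply: val_inj => /=; have := homo_ltn_ord_leq f_incr i.
have rev_incr : {homo (fun j => rev_ord (f (rev_ord j))) : j j' / j < j'}.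
  move=> j j' jj' /=; have : rev_ord j' < rev_ord j by rewrite /=; have := ltn_ord j'; lia.
  by move/f_incr; have := ltn_ord (f (rev_ord j)); lia.
have := homo_ltn_ord_leq rev_incr (rev_ord i); rewrite /= rev_ordK.
have := ltn_ord i; have := ltn_ord (f i); lia.
Qed.

Lemma sort_ord_inj m n (h : 'I_m -> 'I_n) : injective h ->
  exists g : 'I_m -> 'I_n, exists2 p : 'S_m, {homo g : i j / i < j} & h =1 g \o p.
Proof.
move=> h_inj; pose rank a := #|[set b | h b < h a]|.
have rank_lt a : rank a < m.
  rewrite -[m]card_ord -cardsT; apply/proper_card/properP; split; first exact: subsetT.
  by exists a; rewrite ?inE ?ltnn.
have rank_homo a b : h a < h b -> rank a < rank b.
  move=> hab; apply/proper_card/properP; split; last by exists a; rewrite !inE ?ltnn.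
  by apply/subsetP => c; rewrite !inE => /ltn_trans; apply.
have rank_inj : injective (fun a => Ordinal (rank_lt a)).
  move=> a b /(congr1 val) /= rab; apply/h_inj/val_inj/eqP.
  by case: ltngtP => // /rank_homo; rewrite rab ltnn.
pose p := perm rank_inj; exists (h \o p^-1)%g; exists p => [i j ij /=|a /=]; last by rewrite permK.
have rank_pV k : rank (p^-1 k)%g = k by have := congr1 val (permKV p k); rewrite permE.
case: ltngtP => // [/rank_homo|/val_inj/h_inj/perm_inj eij]; last by rewrite eij ltnn in ij.
by rewrite !rank_pV ltnNge ltnW.
Qed.

Lemma imset_homo_ltn_ord m n (S : {set 'I_n}) : #|S| = m ->
  exists2 f : 'I_m -> 'I_n, {homo f : i j / i < j} & f @: setT = S.
Proof.
move=> cardS; pose h i := enum_val (cast_ord (esym cardS) i).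
have h_inj : injective h by move=> i j /enum_val_inj/cast_ord_inj.
have [g [p g_incr hgp]] := sort_ord_inj h_inj.
exists g => //; apply/eqP; rewrite eqEcard (card_imset _ (homo_ltn_ord_inj g_incr)).
rewrite cardsT card_ord cardS leqnn andbT; apply/subsetP => _ /imsetP[i _ ->].
by rewrite -[i](permKV p) -[g _]/((g \o p) _) -hgp enum_valP.
Qed.

Section Inversions.
Variables (n : nat) (s : 'S_n).
Implicit Types (x y : 'I_n) (S U : {set 'I_n}).

Definition inverted x y := (x < y) (+) (s x < s y).

Definition odd_inv S :=
  \big[addb/false]_(x in S) \big[addb/false]_(y in S) ((x < y) && inverted x y).

Definition odd_inv_with x U := \big[addb/false]_(u in U) inverted x u.

Lemma invertedxx x : inverted x x = false.
Proof. by rewrite /inverted !ltnn. Qed.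

Lemma invertedC x y : inverted x y = inverted y x.
Proof.
rewrite /inverted; case: ltngtP => [xy|xy|/val_inj-> //];
  by case: ltngtP => [||/val_inj/perm_inj exy] //; rewrite exy ltnn in xy.
Qed.

Lemma odd_inv_withU1 x y U : y \notin U ->
  odd_inv_with x (y |: U) = inverted x y (+) odd_inv_with x U.
Proof. exact: big_setU1. Qed.

Lemma odd_invU1 x U : x \notin U -> odd_inv (x |: U) = odd_inv U (+) odd_inv_with x U.
Proof.
move=> xU; rewrite /odd_inv big_setU1 //=.
under [X in _ (+) X = _]eq_bigr => y _ do rewrite big_setU1 //=.
rewrite big_setU1 //= ltnn /= big_split /= addbCA addbA addbC; congr addb.
rewrite /odd_inv_with -big_split /=; apply: eq_bigr => y yU.
rewrite (invertedC y x); case: ltngtP => [||/val_inj yx]; rewrite ?addbF //.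
by rewrite -yx yU in xU.
Qed.

End Inversions.

Lemma odd_inv_imset m n (s : 'S_n) (f : 'I_m -> 'I_n) : {homo f : i j / i < j} ->
  odd_inv s (f @: setT) =
    \big[addb/false]_(i < m) \big[addb/false]_(j < m | i < j) inverted s (f i) (f j).
Proof.
move=> f_incr; have f_inj := homo_ltn_ord_inj f_incr.
rewrite /odd_inv big_imset => [|i j _ _ /f_inj //].
apply: eq_big => [i|i _]; first by rewrite inE.
rewrite big_imset => [|j j' _ _ /f_inj //].
rewrite [RHS]big_mkcond; apply: eq_big => [j|j _]; first by rewrite inE.
by rewrite (homo_ltn_ord_mono f_incr); case: ifP.
Qed.

Lemma inverted1 n (x y : 'I_n) : inverted 1 x y = false.
Proof. by rewrite /inverted !perm1 addbb. Qed.

Lemma odd_inv_const n (s : 'S_n) c : (forall x y, x != y -> inverted s x y = c) ->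
  forall S, odd_inv s S = c && odd 'C(#|S|, 2).
Proof.
move=> s_const S; elim: {S}#|S| {-2}S (erefl #|S|) => [|j IH] S cardS.
  by move/eqP: (cardS); rewrite cards_eq0 => /eqP->; rewrite /odd_inv big_set0 cards0 andbF.
have /set0Pn[x xS] : S != set0 by rewrite -card_gt0 cardS.
have cardSx : #|S :\ x| = j by have := cardsD1 x S; rewrite xS cardS => -[].
rewrite cardS -(setD1K xS) odd_invU1 ?setD11 // IH // /odd_inv_with.
rewrite (eq_bigr (fun=> c)) => [|y]; last by rewrite !inE => /andP[yx _]; rewrite s_const // eq_sym.
by rewrite big_addb_const cardSx binS bin1 oddD; case: (c).
Qed.

Lemma odd_inv1 n (S : {set 'I_n}) : odd_inv 1 S = false.
Proof. by rewrite (@odd_inv_const _ _ false) // => x y _; rewrite inverted1. Qed.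

Definition rev_perm n : 'S_n := perm (@rev_ord_inj n).

Lemma rev_permE n (i : 'I_n) : rev_perm n i = rev_ord i.
Proof. exact: permE. Qed.

Lemma inverted_rev n (x y : 'I_n) : x != y -> inverted (rev_perm n) x y.
Proof.
rewrite /inverted !rev_permE /= -val_eqE /= => xy.
have := ltn_ord x; have := ltn_ord y; case: ltngtP xy => //= *; lia.
Qed.

Definition even_inv n (s : 'S_n) k := forall S : {set 'I_n}, #|S| = k -> ~~ odd_inv s S.

Section EvenInversions.
Variables (n k : nat) (s : 'S_n).
Hypotheses (k_even : ~~ odd k) (k_gt0 : 0 < k) (k_le : k.+2 <= n) (s_even : even_inv s k).

Implicit Types (U V : {set 'I_n}) (x y z w : 'I_n).

Let k_gt1 : 1 < k. Proof. by case: k k_even k_gt0 => [|[]]. Qed.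

Lemma odd_inv_with_notin U x y : #|U| = k.-1 -> x \notin U -> y \notin U ->
  odd_inv_with s x U = odd_inv_with s y U.
Proof.
move=> cardU xU yU; apply: (@addbI (odd_inv s U)); rewrite -!odd_invU1 //.
have cardU1 z : z \notin U -> #|z |: U| = k by move=> zU; rewrite cardsU1 zU cardU; lia.
by rewrite (negbTE (s_even (cardU1 x xU))) (negbTE (s_even (cardU1 y yU))).
Qed.

Lemma inverted_addb_notin V x y z : #|V| = k.-2 -> {in V, forall v, v \notin [:: x; y; z]} ->
  z != x -> z != y ->
  inverted s x z (+) inverted s y z = odd_inv_with s x V (+) odd_inv_with s y V.
Proof.
move=> cardV Vxyz zx zy.
have notV v : v \in [:: x; y; z] -> v \notin V by move=> vxyz; apply/negP => /Vxyz; rewrite vxyz.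
have zV : z \notin V by apply: notV; rewrite !inE eqxx !orbT.
have := @odd_inv_with_notin (z |: V) x y.
rewrite !odd_inv_withU1 // cardsU1 zV cardV !in_setU1 (eq_sym x) (eq_sym y) (negbTE zx) (negbTE zy).
rewrite !notV ?inE ?eqxx ?orbT //= => /(_ ltac:(lia) isT isT).
by case: inverted; case: inverted; case: odd_inv_with; case: odd_inv_with.
Qed.

Lemma inverted_addb_indep x y z w : z \notin [:: x; y] -> w \notin [:: x; y] ->
  inverted s x z (+) inverted s y z = inverted s x w (+) inverted s y w.
Proof.
rewrite !inE !negb_or => /andP[zx zy] /andP[wx wy].
have [V cardV Vavoid] :=
  @exists_card_avoiding _ [:: x; y; z; w] k.-2 ltac:(rewrite card_ord /=; lia).
rewrite (@inverted_addb_notin V) // ?(@inverted_addb_notin V x y w) // => v /Vavoid;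
  by apply: contra; rewrite !inE => /or3P[] ->; rewrite ?orbT.
Qed.

Lemma inverted_eql x y z : z \notin [:: x; y] -> inverted s x z = inverted s y z.
Proof.
move=> zxy; have [zx zy] : z != x /\ z != y by move: zxy; rewrite !inE negb_or => /andP.
have [V cardV Vavoid] := @exists_card_avoiding _ [:: x; y; z] k.-2 ltac:(rewrite card_ord /=; lia).
suff: inverted s x z (+) inverted s y z = false by case: inverted; case: inverted.
(* The sum over V has an even number k-2 of terms, each equal to the left-hand side. *)
rewrite (inverted_addb_notin cardV Vavoid) // /odd_inv_with -big_split /=.
rewrite (eq_bigr (fun=> inverted s x z (+) inverted s y z)) ?big_addb_const ?cardV.
  by rewrite -subn2 oddB // (negbTE k_even) andbF.
move=> v /Vavoid; rewrite !inE !negb_or => /and3P[vx vy _].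
by rewrite (@inverted_addb_indep x y v z) // !inE !negb_or vx vy.
Qed.

Lemma inverted_const x y x' y' : x != y -> x' != y' -> inverted s x y = inverted s x' y'.
Proof.
have notin2 a b c : c != a -> c != b -> c \notin [:: a; b].
  by move=> ca cb; rewrite !inE negb_or ca cb.
have [<-|x'y] := eqVneq x' y => xy x'y'.
  have x'_notin : x' \notin [:: x; y'] by apply: notin2 => //; rewrite eq_sym.
  by rewrite (inverted_eql x'_notin) invertedC.
have y_notin : y \notin [:: x; x'] by apply: notin2 => //; rewrite eq_sym.
have x'_notin : x' \notin [:: y; y'] by apply: notin2.
by rewrite (inverted_eql y_notin) invertedC (inverted_eql x'_notin) invertedC.
Qed.

End EvenInversions.

Lemma inverted_none_perm1 n (s : 'S_n) : (forall x y, x != y -> ~~ inverted s x y) -> s = 1%g.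
Proof.
move=> s_none; apply/permP => x; rewrite perm1; apply: homo_ltn_ord_id => y z yz.
by move: (s_none y z (negbT (ltn_eqF yz))); rewrite /inverted yz negbK.
Qed.

Lemma inverted_all_rev_perm n (s : 'S_n) : (forall x y, x != y -> inverted s x y) -> s = rev_perm n.
Proof.
move=> s_all; have rev_s_incr : {homo (fun x => rev_ord (s x)) : x y / x < y}.
  move=> x y xy /=; move: (s_all x y (negbT (ltn_eqF xy))); rewrite /inverted xy /= -leqNgt.
  rewrite leq_eqVlt val_eqE (inj_eq perm_inj) -val_eqE (gtn_eqF xy) /=.
  by have := ltn_ord (s x); lia.
by apply/permP => x; rewrite rev_permE -[x in RHS](homo_ltn_ord_id rev_s_incr) rev_ordK.
Qed.

Lemma even_inv_classify n k (s : 'S_n) : ~~ odd k -> 0 < k -> k.+2 <= n ->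
  even_inv s k <-> s = 1%g \/ s = rev_perm n /\ ~~ odd k./2.
Proof.
move=> k_even k_gt0 k_le.
split=> [s_even | [->|[-> k2_even]] S cardS]; last 2 first.
- by rewrite odd_inv1.
- by rewrite (@odd_inv_const _ _ true) ?cardS ?odd_bin2 //; apply: inverted_rev.
have n_gt1 : 1 < n by lia.
have s_const x y : x != y -> inverted s x y = inverted s (Ordinal (ltnW n_gt1)) (Ordinal n_gt1).
  by move=> xy; apply: (inverted_const k_even k_gt0 k_le s_even).
move: s_const; case: inverted => s_const; [right; split | left].
- by apply: inverted_all_rev_perm => x y /s_const ->.
- have [S cardS _] := @exists_card_avoiding 'I_n [::] k ltac:(rewrite card_ord /=; lia).
  by have := s_even S cardS; rewrite (odd_inv_const s_const) cardS odd_bin2.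
- by apply: inverted_none_perm1 => x y /s_const ->.
Qed.

Section Vandermonde.
Local Open Scope ring_scope.

Lemma sgr_det_Vandermonde_perm (R : realDomainType) m n (s : 'S_n) (f : 'I_m -> 'I_n) :
  {homo f : i j / (i < j)%N} ->
  Num.sg (\det (Vandermonde m (\row_j ((s (f j))%:R : R)))) = (-1) ^+ odd_inv s (f @: setT).
Proof.
move=> f_incr; have sign_false : (-1 : R) ^+ false = 1 by [].
rewrite det_Vandermonde odd_inv_imset //.
rewrite (big_morph _ (@sgrM R) (sgr1 R)) (big_morph _ (@signr_addb R) sign_false).
apply: eq_bigr => i _.
rewrite (big_morph _ (@sgrM R) (sgr1 R)) (big_morph _ (@signr_addb R) sign_false).
apply: eq_bigr => j ij; rewrite !mxE /inverted (homo_ltn_ord_mono f_incr) ij /=.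
case: ltngtP => [lt_ij|lt_ji|/val_inj/perm_inj/(homo_ltn_ord_inj f_incr) eij]; last first.
- by rewrite eij ltnn in ij.
- by rewrite ltr0_sg // subr_lt0 ltr_nat.
- by rewrite gtr0_sg // subr_gt0 ltr_nat.
Qed.

Lemma det_col_perm (R : comPzRingType) n (s : 'S_n) (A : 'M[R]_n) :
  \det (col_perm s A) = (-1) ^+ s * \det A.
Proof. by rewrite col_permE det_mulmx det_perm odd_permV mulrC. Qed.

Lemma odd_perm_sorting m n (s : 'S_n) (f g : 'I_m -> 'I_n) (p : 'S_m) :
  {homo f : i j / (i < j)%N} -> {homo g : i j / (i < j)%N} -> s \o f =1 g \o p ->
  odd_perm p = odd_inv s (f @: setT).
Proof.
(* Compare two factorisations of the same integer Vandermonde determinant. *)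
move=> f_incr g_incr sf_gp; apply: (@signr_inj int).
have Vgp : Vandermonde m (\row_j ((s (f j))%:R : int)) =
      col_perm p (Vandermonde m (\row_j (g j)%:R)).
  by apply/matrixP => i j; rewrite !mxE -[s (f j)]/((s \o f) j) sf_gp.
rewrite -sgr_det_Vandermonde_perm // Vgp det_col_perm sgrM sgrX sgrN1.
have -> : \row_j ((g j)%:R : int) = \row_j (((1 : 'S_n)%g (g j))%:R).
  by apply/rowP => j; rewrite !mxE perm1.
by rewrite sgr_det_Vandermonde_perm // odd_inv1 mulr1.
Qed.

End Vandermonde.

Lemma odd_inv_setT n (s : 'S_n) : odd_inv s setT = odd_perm s.
Proof. by rewrite -[setT]imset_id -(@odd_perm_sorting _ _ s (fun i => i) (fun i => i) s). Qed.

Lemma odd_inv_with_setC1 n (s : 'S_n) p : odd_inv_with s p [set~ p] = odd p (+) odd (s p).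
Proof.
have -> : odd_inv_with s p [set~ p] = \big[addb/false]_u inverted s p u.
  rewrite /odd_inv_with big_mkcond; apply: eq_bigr => u _.
  by rewrite !inE; case: eqP => // ->; rewrite invertedxx.
rewrite /inverted big_split /= big_addb_ltn (reindex_inj (@perm_inj _ s^-1)) /=.
under eq_bigr do rewrite permKV.
rewrite big_addb_ltn !oddB ?ltn_ord //=.
by do 3 case: odd.
Qed.

Lemma odd_inv_setC1 n (s : 'S_n) p :
  odd_inv s [set~ p] = odd_perm s (+) odd p (+) odd (s p).
Proof.
have setT_U1 : setT = p |: [set~ p] by apply/setP => x; rewrite !inE orbN.
rewrite -odd_inv_setT setT_U1 odd_invU1 ?setC11 // odd_inv_with_setC1.
by rewrite -addbA -addbA addbb addbF.
Qed.

Lemma even_inv_setC1 k (s : 'S_k.+1) :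
  even_inv s k <-> forall p, ~~ odd_inv s [set~ p].
Proof.
split=> [s_even p | s_even S cardS]; first by apply: s_even; rewrite cardsC1 card_ord.
have /cards1P[p Sp] : #|~: S| == 1 by rewrite cardsCs setCK card_ord cardS subSnn.
by rewrite -[S]setCK Sp.
Qed.

Lemma even_inv_codim1 k (s : 'S_k.+1) : ~~ odd k ->
  even_inv s k <-> ~~ odd_perm s /\ forall i, odd (s i) = odd i.
Proof.
move=> k_even; rewrite even_inv_setC1.
split=> [s_setC1 | [s_even s_par] p]; last first.
  by rewrite odd_inv_setC1 (negbTE s_even) s_par addFb addbb.
have s_par p : odd (s p) = odd_perm s (+) odd p.
  by move: (s_setC1 p); rewrite odd_inv_setC1; case: odd; case: odd; case: odd_perm.
have [i] := @perm_parity_fixed _ s k_even; rewrite s_par => s_fix_i.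
have s_even : ~~ odd_perm s by move: s_fix_i; case: odd_perm; case: odd.
by split=> // j; rewrite s_par (negbTE s_even).
Qed.

Lemma even_inv_full n (s : 'S_n) : even_inv s n <-> ~~ odd_perm s.
Proof.
rewrite -odd_inv_setT; split=> [|s_even S cardS]; first by apply; rewrite cardsT card_ord.
suff -> : S = setT by [].
by apply/eqP; rewrite eqEcard subsetT cardS cardsT card_ord /=.
Qed.

Section MomentCurve.
Variables (R : realType) (d n : nat).
Local Open Scope ring_scope.

Lemma colsub_lift_mx m (g : 'I_m -> 'I_n) (x : 'I_n -> 'cV[R]_d) :
  colsub g (lift_mx x) = lift_mx (x \o g).
Proof. by apply/matrixP => i j; rewrite /lift_mx !mxE; case: splitP => i' _; rewrite !mxE. Qed.

Definition moment_curve (j : 'I_n) : 'cV[R]_d := \col_(i < d) (j%:R ^+ i.+1).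

Lemma lift_mx_moment_curve m (h : 'I_m -> 'I_n) :
  lift_mx (moment_curve \o h) = Vandermonde (1 + d) (\row_j (h j)%:R).
Proof.
apply/matrixP => i j; rewrite /lift_mx /Vandermonde !mxE.
by case: splitP => i' ->; rewrite !mxE // ord1 expr0.
Qed.

Lemma moment_curve_perm_positive (s : 'S_n) :
  positive_config (moment_curve \o s) <-> even_inv s (1 + d).
Proof.
have sgr_det (f : 'I_(1 + d) -> 'I_n) : {homo f : i j / (i < j)%N} ->
    Num.sg (\det (colsub f (lift_mx (moment_curve \o s)))) = (-1) ^+ odd_inv s (f @: setT).
  by move=> f_incr; rewrite colsub_lift_mx lift_mx_moment_curve sgr_det_Vandermonde_perm.
split=> [pos S cardS | s_even f f_incr].
  have [f f_incr <-] := imset_homo_ltn_ord cardS.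
  by have := pos f f_incr; rewrite -sgr_gt0 sgr_det //; case: odd_inv; rewrite ?oppr_gt0 ?ltr10.
rewrite -sgr_gt0 sgr_det // (negbTE (s_even _ _)) ?ltr01 //.
by rewrite (card_imset _ (homo_ltn_ord_inj f_incr)) cardsT card_ord.
Qed.

Lemma moment_curve_positive : positive_config moment_curve.
Proof.
have -> : moment_curve = moment_curve \o (1 : 'S_n)%g by apply/funext => j; rewrite /= perm1.
by apply/moment_curve_perm_positive => S _; rewrite odd_inv1.
Qed.

Lemma Cdn_even_inv (s : 'S_n) : s \in Cdn R d n <-> even_inv s (1 + d).
Proof.
rewrite inE; split=> [/asboolP s_Cdn | s_even].
  exact/moment_curve_perm_positive/s_Cdn/moment_curve_positive.
apply/asboolP => x x_pos f f_incr.
have sf_inj : injective (s \o f) by move=> i j /perm_inj/(homo_ltn_ord_inj f_incr).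
have [g [p g_incr sf_gp]] := sort_ord_inj sf_inj.
have p_even : ~~ odd_perm p.
  rewrite (odd_perm_sorting f_incr g_incr sf_gp) s_even //.
  by rewrite (card_imset _ (homo_ltn_ord_inj f_incr)) cardsT card_ord.
rewrite (colsub_lift_mx f (fun j => x (s j))) -(colsub_lift_mx (s \o f)).
rewrite (eq_colsub _ sf_gp) colsub_comp -col_permEsub det_col_perm (negbTE p_even) mul1r.
exact: x_pos.
Qed.

End MomentCurve.

Lemma rev_perm_order n : 1 < n -> #[rev_perm n]%g = 2.
Proof.
move=> n_gt1; apply/prime_nt_dvdP => //.
  rewrite order_eq1; apply/eqP => /permP/(_ (Ordinal (ltnW n_gt1))) /(congr1 val).
  by rewrite rev_permE perm1 /=; lia.
by rewrite order_dvdn expgS expg1; apply/eqP/permP => i; rewrite permM !rev_permE rev_ordK perm1.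
Qed.

Lemma mem_Cdn_large (R : realType) d n (s : 'S_n) : odd d -> d.+3 <= n ->
  (s \in Cdn R d n) = (s == 1%g) || (s == rev_perm n) && ~~ odd (d.+1)./2.
Proof.
move=> d_odd n_ge; have k_even : ~~ odd (1 + d) by rewrite /= d_odd.
have classify := even_inv_classify s k_even (ltn0Sn d) n_ge.
apply/idP/idP => [/Cdn_even_inv/classify[->|[-> ->]] | s_sym]; rewrite ?eqxx ?orbT //.
by apply/Cdn_even_inv/classify; case/orP: s_sym => [/eqP|/andP[/eqP]]; [left | right].
Qed.

Theorem proposition3p8 (R : realType) (d n : nat) :
  odd d -> (d.+1 <= n)%N ->
  [/\ n = d.+1 -> Cdn R d n = ('Alt_('I_n))%g,
      n = d.+2 -> Cdn R d n =
        [set s in ('Alt_('I_n))%g | [forall i : 'I_n, odd (s i) == odd i]],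
      (d.+3 <= n)%N -> ~~ odd (d.+1)./2 -> (Cdn R d n \isog [set: 'Z_2])%g
    & (d.+3 <= n)%N -> odd (d.+1)./2 -> Cdn R d n = 1%g].
Proof.
move=> d_odd _; have k_even : ~~ odd d.+1 by rewrite /= d_odd.
split=> [-> | -> | n_ge k2_even | n_ge k2_odd].
- apply/setP => s; rewrite (Alt_even s).
  by apply/idP/idP => [/Cdn_even_inv/even_inv_full | /even_inv_full/Cdn_even_inv].
- apply/setP => s; rewrite [RHS]inE (Alt_even s).
  apply/idP/andP => [/Cdn_even_inv/(even_inv_codim1 _ k_even)[-> s_par] | [s_even /forallP s_par]].
    by split=> //; apply/forallP => i; rewrite s_par.
  by apply/Cdn_even_inv/(even_inv_codim1 _ k_even); split=> // i; apply/eqP/s_par.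
- have rev_order : #[rev_perm n]%g = 2 by apply: rev_perm_order; lia.
  have -> : Cdn R d n = <[rev_perm n]>%g.
    by rewrite cycle2g //; apply/setP => s; rewrite mem_Cdn_large // k2_even andbT !inE.
  rewrite isog_cyclic_card ?cycle_cyclic ?prime_cyclic ?cardsT ?card_ord //.
  by rewrite -/(order _) rev_order.
- by apply/setP => s; rewrite mem_Cdn_large // k2_odd andbF orbF !inE.
Qed.
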